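(* Let $m\ge 2$, $\sigma_0\in\{-1,+1\}$, $\tau>0$, real numbers $\alpha_0,\alpha_1,\dots,\alpha_{m-1}$ with $\alpha_0\ge 0$, and a real $(m-1)\times(m-1)$ signed permutation matrix $P$ be given. Consider the system $$D\,\partial_t q + \hat A\,\partial_x q = \hat B q,\qquad \hat A=\begin{bmatrix} (\alpha_1,\dots,\alpha_{m-1}) & \sigma_0\\ P & 0_{(m-1)\times 1}\end{bmatrix},\quad \hat B=\begin{bmatrix} -\alpha_0 & 0_{1\times(m-1)}\\ 0_{(m-1)\times 1} & P\end{bmatrix},$$ $D=\operatorname{diag}(1,\tau,\dots,\tau)$, i.e. $\partial_t q_0+\sum_{j=1}^{m-1}\alpha_j\partial_x q_{j-1}+\sigma_0\partial_x q_{m-1}=-\alpha_0 q_0$ and $\tau\partial_t q_i+\sum_{j}p_{ij}\partial_x q_{j-1}=\sum_j p_{ij}q_j$ for $i=1,\dots,m-1$. Then: (i) (stability at $k=0$) every $\omega\in\mathbb{C}$ with $\det(-i\omega D-\hat B)=0$ satisfies $\operatorname{Im}\omega\le 0$ if and only if $P=R-E$ with $R$ real skew-symmetric and $E$ diagonal with diagonal entries in $\{0,1\}$; (ii) (stability as $|k|\to\infty$) if $P=P^*$, then all eigenvalues of $\hat A$ are real, for every choice of real $\alpha_1,\dots,\alpha_{m-1}$.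
   Context: A real signed permutation matrix is a square matrix with all entries in $\{-1,0,+1\}$ having exactly one nonzero entry in each row and in each column. The matrix $P^*=(p^*_{ij})_{i,j=1}^{m-1}$ is defined by $p^*_{ij}=0$ if $i+j\ne m$, $p^*_{ij}=\sigma_0(-1)^{j-1}$ if $i+j=m$ and $j\le m/2$, and $p^*_{ij}=\sigma_0(-1)^{m-j}$ if $i+j=m$ and $j>m/2$. The system is a first-order relaxation of $u_t+\sum_{j=0}^{m-1}\alpha_j\partial_x^j u+\sigma_0\partial_x^m u=0$ with $q_j\approx\partial_x^j u$. The dispersion relation of the system is $\det(-i\omega D+ik\hat A-\hat B)=0$ (ansatz $q=\hat q e^{i(kx-\omega t)}$); stability at a wavenumber means all its roots $\omega$ satisfy $\operatorname{Im}\omega\le0$, and in the limit $|k|\to\infty$ this reduces to the requirement that $\hat A$ have only real eigenvalues. *)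

From HB Require Import structures.
From mathcomp Require Import all_boot all_order all_algebra.
From mathcomp Require Import complex.
From mathcomp Require Import reals.
Set Implicit Arguments. Unset Strict Implicit. Unset Printing Implicit Defensive.
Import Order.TTheory GRing.Theory Num.Theory.
Local Open Scope ring_scope.

Definition signed_perm_mx (R : nzRingType) (n : nat) (A : 'M[R]_n) : bool :=
  [forall i, forall j, A i j \in [:: -1; 0; 1]] &&
  [forall i, #|[set j | A i j != 0]| == 1%N] &&
  [forall j, #|[set i | A i j != 0]| == 1%N].

(* Throughout, n = m - 1 (so m = n + 1).  Indices of P run over 'I_n,
   with the 0-based index i standing for the paper's index i+1. *)

Definition Pstar (R : nzRingType) (n : nat) (s0 : R) : 'M[R]_n :=
  \matrix_(i < n, j < n)
    if (i.+1 + j.+1 == n.+1)%N then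
      (if (2 * j.+1 <= n.+1)%N then s0 * (-1) ^+ (j.+1).-1
       else s0 * (-1) ^+ (n.+1 - j.+1))
    else 0.

Definition Ahat (R : nzRingType) (n : nat) (alpha : 'rV[R]_n) (s0 : R)
  (P : 'M[R]_n) : 'M[R]_(1 + n) :=
  castmx (erefl (1 + n)%N, addnC n 1)
    (block_mx alpha (s0%:M : 'M[R]_1) P (0 : 'M[R]_(n, 1))).

Definition Bhat (R : nzRingType) (n : nat) (alpha0 : R) (P : 'M[R]_n)
  : 'M[R]_(1 + n) :=
  block_mx ((- alpha0)%:M : 'M[R]_1) 0 0 P.

Definition Dmx (R : nzRingType) (n : nat) (tau : R) : 'M[R]_(1 + n) :=
  block_mx (1%:M : 'M[R]_1) 0 0 (tau%:M : 'M[R]_n).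

Definition cmx (R : rcfType) (p q : nat) (A : 'M[R]_(p, q)) : 'M[R[i]]_(p, q) :=
  map_mx (fun x : R => (x%:C)%C) A.

(* At k = 0 the dispersion determinant factors as
   (alpha0 - i w) det(-i w tau - P), so stability at k = 0 says exactly that
   every eigenvalue of P lies in the closed left half-plane.  A signed
   permutation matrix is orthogonal, hence normal, and for a normal matrix this
   is equivalent to x P x^T <= 0 for every real x.  Testing this inequality on
   e_i and on e_i + P_ij e_j forces P_ii in {0, -1} and P_ji = - P_ij, that is
   P = R - E.
   For P = P^*, a left eigenvector of \hat A with eigenvalue z links either the
   coordinates 0 and m - 1, or (when the coordinate 0 vanishes) two
   coordinates t and m - t through entries of P^* whose product is 1.  In both
   cases z is a root of z^2 - a z - 1 with a real, and such roots are real. *)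

From HB Require Import structures.
From mathcomp Require Import all_boot all_order all_algebra.
From mathcomp Require Import complex.
From mathcomp Require Import reals.
From mathcomp Require Import ring lra zify.
Import Order.TTheory GRing.Theory Num.Theory.
Set Implicit Arguments. Unset Strict Implicit. Unset Printing Implicit Defensive.
Local Open Scope ring_scope.

Section SignedPermutation.
Variables (R : nzRingType) (n : nat) (P : 'M[R]_n).
Hypothesis hP : signed_perm_mx P.

Lemma signed_perm_mx_entry i j : P i j \in [:: -1; 0; 1].
Proof. by case/andP: hP => /andP[/forallP/(_ i)/forallP/(_ j) ? _] _. Qed.

Lemma signed_perm_mx_row_uniq i j k : P i j != 0 -> P i k != 0 -> j = k.
Proof.
case/andP: hP => /andP[_ /forallP/(_ i)/cards1P[x Hx]] _ Hj Hk.
have: j \in [set j | P i j != 0] by rewrite inE.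
have: k \in [set j | P i j != 0] by rewrite inE.
by rewrite Hx !inE => /eqP-> /eqP->.
Qed.

Lemma signed_perm_mx_col_uniq i j k : P i j != 0 -> P k j != 0 -> i = k.
Proof.
case/andP: hP => _ /forallP/(_ j)/cards1P[x Hx] Hj Hk.
have: i \in [set i | P i j != 0] by rewrite inE.
have: k \in [set i | P i j != 0] by rewrite inE.
by rewrite Hx !inE => /eqP-> /eqP->.
Qed.

Lemma signed_perm_mx_col_neq0 j : exists i, P i j != 0.
Proof.
case/andP: hP => _ /forallP/(_ j)/cards1P[x Hx]; exists x.
have: x \in [set i | P i j != 0] by rewrite Hx inE.
by rewrite inE.
Qed.

Lemma signed_perm_mx_sqr i j : P i j != 0 -> P i j ^+ 2 = 1.
Proof.
move: (signed_perm_mx_entry i j); rewrite !inE => /or3P[]/eqP->; last 2 first.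
- by rewrite eqxx.
- by rewrite expr1n.
by rewrite sqrrN expr1n.
Qed.

Lemma signed_perm_mx_orthogonal : P^T *m P = 1%:M.
Proof.
apply/matrixP=> j k; rewrite !mxE.
have [i Hi] := signed_perm_mx_col_neq0 j.
rewrite (bigD1 i) //= big1 => [|l Hl]; rewrite !mxE.
  case: eqP => [<-|Hjk]; first by rewrite -expr2 signed_perm_mx_sqr // addr0.
  have [->|Hnz] := eqVneq (P i k) 0; first by rewrite mulr0 addr0.
  by case: Hjk; apply: signed_perm_mx_row_uniq Hi Hnz.
have [->|Hnz] := eqVneq (P l j) 0; first by rewrite mul0r.
by move: Hl; rewrite (signed_perm_mx_col_uniq Hi Hnz) eqxx.
Qed.

End SignedPermutation.

Lemma eigenvalue_det (F : fieldType) n (A : 'M[F]_n) a :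
  eigenvalue A a = (\det (a%:M - A) == 0).
Proof.
apply/eigenvalueP/det0P=> [[v Av_av v_nz] | [v v_nz Av_av]]; exists v => //.
  by rewrite mulmxBr Av_av mul_mx_scalar subrr.
by apply/eqP; rewrite -mul_mx_scalar eq_sym -subr_eq0 -mulmxBr Av_av.
Qed.

Definition qform (R : comNzRingType) n (M : 'M[R]_n) (x : 'rV[R]_n) : R :=
  (x *m M *m x^T) 0 0.

Lemma qformE (R : comNzRingType) n (M : 'M[R]_n) x :
  qform M x = \sum_i \sum_j x 0 i * M i j * x 0 j.
Proof.
rewrite /qform mxE exchange_big; apply: eq_bigr => j _; rewrite mxE big_distrl /=.
by apply: eq_bigr => i _; rewrite !mxE.
Qed.

Lemma delta_mx_form (R : comNzRingType) n (M : 'M[R]_n) i j :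
  ((delta_mx 0 i : 'rV_n) *m M *m (delta_mx 0 j : 'rV_n)^T) 0 0 = M i j.
Proof.
rewrite -rowE trmx_delta mxE (bigD1 j) //= big1 => [|k /negbTE kj].
  by rewrite !mxE !eqxx mulr1 addr0.
by rewrite !mxE kj mulr0.
Qed.

Lemma qform_delta (R : comNzRingType) n (M : 'M[R]_n) i :
  qform M (delta_mx 0 i) = M i i.
Proof. exact: delta_mx_form. Qed.

Lemma qform_delta_add (R : comNzRingType) n (M : 'M[R]_n) i j a :
  qform M (delta_mx 0 i + a *: delta_mx 0 j) =
  M i i + a * M i j + a * M j i + a ^+ 2 * M j j.
Proof.
rewrite /qform linearD /= linearZ /= !mulmxDl !mulmxDr -!scalemxAl -!scalemxAr.
rewrite scalerA -expr2 -trace_mx11 !raddfD /= !linearZ /= !trace_mx11.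
by rewrite !delta_mx_form; ring.
Qed.

Lemma qform_skew (R : numDomainType) n (S : 'M[R]_n) x :
  S^T = - S -> qform S x = 0.
Proof.
move=> skewS; have qN : qform S x = - qform S x.
  have trE (A : 'M[R]_1) : A 0 0 = A^T 0 0 by rewrite mxE.
  by rewrite {1}/qform trE !trmx_mul trmxK skewS mulNmx mulmxN mulmxA mxE.
have /eqP : qform S x *+ 2 = 0 by rewrite mulr2n {1}qN addNr.
by rewrite mulrn_eq0 => /eqP.
Qed.

Lemma qform_diag_ge0 (R : realDomainType) n (E : 'M[R]_n) x :
  is_diag_mx E -> (forall k, 0 <= E k k) -> 0 <= qform E x.
Proof.
move=> /is_diag_mxP diagE E_ge0; rewrite qformE; apply: sumr_ge0 => i _.
rewrite (bigD1 i) //= big1 ?addr0 => [|j ji].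
  by rewrite mulrAC -expr2 mulr_ge0 ?sqr_ge0.
by rewrite diagE ?mulr0 ?mul0r // eq_sym.
Qed.

Section SignedPermutationForm.
Variables (R : realDomainType) (n : nat) (P : 'M[R]_n).
Hypothesis hP : signed_perm_mx P.

Lemma signed_perm_mx_qform_le0_offdiag i j :
  (forall x, qform P x <= 0) -> i != j -> P i j != 0 -> P j i = - P i j.
Proof.
move=> P_le0 ij Pij.
have Pii : P i i = 0.
  by apply/eqP; apply: contraR ij => Pii; apply/eqP/(signed_perm_mx_row_uniq hP Pii).
have Pjj : P j j = 0.
  by apply/eqP; apply: contraR ij => Pjj; apply/eqP/(signed_perm_mx_col_uniq hP Pij).
have := P_le0 (delta_mx 0 i + P i j *: delta_mx 0 j).
rewrite qform_delta_add Pii Pjj.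
move: (signed_perm_mx_entry hP i j) (signed_perm_mx_entry hP j i) Pij; rewrite !inE.
by move=> /or3P[]/eqP-> /or3P[]/eqP->; rewrite ?eqxx //= => _; lra.
Qed.

Lemma signed_perm_mx_qform_le0P :
  (forall x, qform P x <= 0) <->
  exists S E : 'M[R]_n, S^T = - S /\ is_diag_mx E /\
                        (forall k, E k k \in [:: 0; 1]) /\ P = S - E.
Proof.
split=> [P_le0 | [S [E [skewS [diagE [E01 ->]]]]] x]; last first.
  rewrite /qform mulmxBr mulmxBl -trace_mx11 raddfB /= !trace_mx11 -!/(qform _ x).
  rewrite qform_skew // sub0r oppr_le0.
  by apply: qform_diag_ge0 => // k; move: (E01 k); rewrite !inE => /orP[]/eqP->.
exists (\matrix_(i, j) (if i == j then 0 else P i j)),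
       (\matrix_(i, j) (if i == j then - P i i else 0)).
split; [|split; [|split]].
- apply/matrixP=> i j; rewrite !mxE eq_sym.
  case: eqP => [_|/eqP ij]; first by rewrite oppr0.
  have [Pij0|Pij] := eqVneq (P i j) 0; last exact: signed_perm_mx_qform_le0_offdiag.
  rewrite Pij0 oppr0; apply/eqP/contraT => Pji.
  have ji : j != i by rewrite eq_sym.
  move: (signed_perm_mx_qform_le0_offdiag P_le0 ji Pji).
  by rewrite Pij0 => /esym/eqP; rewrite oppr_eq0 (negbTE Pji).
- apply/is_diag_mxP=> i j ij; rewrite mxE; case: eqP => // eq_ij.
  by rewrite eq_ij eqxx in ij.
- move=> k; rewrite mxE eqxx; have := P_le0 (delta_mx 0 k); rewrite qform_delta.
  by move: (signed_perm_mx_entry hP k k); rewrite !inE => /or3P[]/eqP->;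
    rewrite ?opprK ?oppr0 ?eqxx ?orbT //; lra.
- apply/matrixP=> i j; rewrite !mxE.
  by case: eqP => [->|_]; rewrite ?sub0r ?opprK ?subr0.
Qed.

End SignedPermutationForm.

Section Complexification.
Variable R : rcfType.
Local Open Scope sesquilinear_scope.

Lemma det_Dmx_Bhat n (tau alpha0 : R) (P : 'M[R]_n) (c : R[i]) :
  \det (c *: cmx (Dmx n tau) - cmx (Bhat alpha0 P)) =
  (c + alpha0%:C%C) * \det ((c * tau%:C%C)%:M - cmx P).
Proof.
rewrite /cmx /Dmx /Bhat !map_block_mx scale_block_mx opp_block_mx add_block_mx.
rewrite !map_mx0 !scaler0 !subr0 det_ublock !map_scalar_mx /= !scale_scalar_mx.
by rewrite -raddfB /= det_scalar1 rmorphN opprK rmorph1 mulr1.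
Qed.

Lemma Re_mulNi (w : R[i]) : complex.Re (- ('i%C * w)) = complex.Im w.
Proof. by case: w => a b /=; ring. Qed.

Lemma Re_mul_real (z : R[i]) (x : R) : complex.Re (z * x%:C%C) = complex.Re z * x.
Proof. by case: z => a b /=; ring. Qed.

Lemma stable_Dmx_Bhat_iff n (tau alpha0 : R) (P : 'M[R]_n) :
  0 < tau -> 0 <= alpha0 ->
  (forall w : R[i],
     \det (- ('i%C * w) *: cmx (Dmx n tau) - cmx (Bhat alpha0 P)) = 0 ->
     complex.Im w <= 0) <->
  (forall d, eigenvalue (cmx P) d -> complex.Re d <= 0).
Proof.
move=> tau_gt0 alpha0_ge0; split=> [stable d | eig_le0 w].
  rewrite eigenvalue_det => /eqP det_d.
  pose w := 'i%C * d * (tau^-1)%:C%C.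
  have d_eq : - ('i%C * w) * tau%:C%C = d.
    rewrite /w !mulrA -expr2 sqr_i mulN1r !mulNr opprK -mulrA -rmorphM.
    by rewrite mulVf ?gt_eqF // mulr1.
  have := stable w; rewrite det_Dmx_Bhat d_eq det_d mulr0 => /(_ erefl).
  rewrite -Re_mulNi /w !mulrA -expr2 sqr_i mulN1r !mulNr opprK Re_mul_real.
  by rewrite pmulr_lle0 // invr_gt0.
rewrite det_Dmx_Bhat => /eqP; rewrite mulf_eq0 => /orP[/eqP|det_w].
  move/(congr1 (@complex.Re R)); rewrite raddfD /= Re_mulNi => /= Im_w; lra.
have := eig_le0 (- ('i%C * w) * tau%:C%C); rewrite eigenvalue_det det_w.
by rewrite Re_mul_real Re_mulNi pmulr_lle0 // => /(_ isT).
Qed.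

Definition dissipative n (A : 'M[R[i]]_n) :=
  forall v : 'rV_n, complex.Re ((v *m A *m v^t*) 0 0) <= 0.

Lemma Re_cmx_form n (M : 'M[R]_n) (v : 'rV[R[i]]_n) :
  complex.Re ((v *m cmx M *m v^t*) 0 0) =
  qform M (map_mx (@complex.Re R) v) + qform M (map_mx (@complex.Im R) v).
Proof.
rewrite !qformE -big_split mxE raddf_sum /=.
under eq_bigr => c _ do rewrite mxE big_distrl raddf_sum.
rewrite exchange_big; apply: eq_bigr => r _; rewrite -big_split; apply: eq_bigr => c _.
rewrite !mxE; case: (v 0 r) (v 0 c) => a b [c' d] /=; ring.
Qed.

Lemma dissipative_cmx n (M : 'M[R]_n) :
  dissipative (cmx M) <-> forall x, qform M x <= 0.
Proof.
split=> [dissM x | qM v]; last by rewrite Re_cmx_form -[0]addr0 lerD.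
have := dissM (cmx x); rewrite Re_cmx_form.
have -> : map_mx (@complex.Re R) (cmx x) = x by apply/matrixP=> i j; rewrite !mxE.
have -> : map_mx (@complex.Im R) (cmx x) = 0 by apply/matrixP=> i j; rewrite !mxE.
by rewrite {2}/qform trmx0 mulmx0 mxE addr0.
Qed.

Lemma dissipative_eigenvalue n (A : 'M[R[i]]_n) mu :
  dissipative A -> eigenvalue A mu -> complex.Re mu <= 0.
Proof.
move=> dissA /eigenvalueP[v vA v_neq0].
have := dissA v; rewrite vA -scalemxAl mxE -dotmxE.
have := dotmx_is_dotmx v_neq0; rewrite ltcE /= => /andP[/eqP Im0 Re_gt0].
by case: (dotmx v v) Im0 Re_gt0 => c d /= -> c_gt0; case: mu {vA} => a b /=;
  rewrite mulr0 subr0 pmulr_lle0.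
Qed.

Lemma normalmx_dissipative n (A : 'M[R[i]]_n) :
  A \is normalmx -> (forall mu, eigenvalue A mu -> complex.Re mu <= 0) ->
  dissipative A.
Proof.
move=> /orthomx_spectralP; set U := spectralmx A; set d := spectral_diag A.
move=> A_eq eig_le0 v.
have U_unit : U \in unitmx by apply: spectral_unit.
have d_le0 k : complex.Re (d 0 k) <= 0.
  apply/eig_le0/eigenvalueP; exists (delta_mx 0 k *m U).
    rewrite A_eq !mulmxA mulmxK // scalemxAl; congr (_ *m _).
    apply/matrixP=> i j; rewrite mul_mx_diag !mxE ord1 eqxx /=.
    by case: eqP => [->|]; rewrite ?mulr1 ?mulr0 ?mul1r ?mul0r.
  rewrite mulmx_free_eq0 ?row_free_unit //; apply/negP => /eqP/matrixP/(_ 0 k).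
  by rewrite !mxE !eqxx => /eqP; rewrite oner_eq0.
rewrite A_eq invmx_unitary ?spectral_unitarymx // !mulmxA.
have -> : v *m U^t* *m diag_mx d *m U *m v^t* =
    (v *m U^t*) *m diag_mx d *m (v *m U^t*)^t*.
  by rewrite -mulmxA trmx_mul map_mxM trmxCK.
move: (v *m U^t*) => y; rewrite mxE raddf_sum; apply: sumr_le0 => k _.
rewrite mul_mx_diag !mxE; case: (y 0 k) (d 0 k) (d_le0 k) => a b [c e] /= c_le0.
rewrite (_ : _ - _ = c * (a ^+ 2 + b ^+ 2)); last by ring.
by rewrite mulr_le0_ge0 // addr_ge0 ?sqr_ge0.
Qed.

Lemma cmx_trC m p (M : 'M[R]_(m, p)) : (cmx M)^t* = cmx M^T.
Proof. by apply/matrixP=> i j; rewrite !mxE; apply: conjc_real. Qed.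

Lemma cmx_normalmx n (M : 'M[R]_n) :
  M *m M^T = M^T *m M -> cmx M \is normalmx.
Proof. by move=> MMT; apply/normalmxP; rewrite cmx_trC -!map_mxM MMT. Qed.

Lemma signed_perm_mx_eigenvalue_Re_le0P n (P : 'M[R]_n) : signed_perm_mx P ->
  (forall d, eigenvalue (cmx P) d -> complex.Re d <= 0) <->
  exists S E : 'M[R]_n, S^T = - S /\ is_diag_mx E /\
                        (forall k, E k k \in [:: 0; 1]) /\ P = S - E.
Proof.
move=> hP; split=> [eig_le0 | /(signed_perm_mx_qform_le0P hP)/dissipative_cmx diss d].
  apply/(signed_perm_mx_qform_le0P hP)/dissipative_cmx/normalmx_dissipative => //.
  by apply: cmx_normalmx; rewrite signed_perm_mx_orthogonal // mulmx1C
    ?signed_perm_mx_orthogonal.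
exact: dissipative_eigenvalue.
Qed.

End Complexification.

Section AhatEntries.
Variables (R : nzRingType) (n : nat) (alpha : 'rV[R]_n) (s0 : R) (P : 'M[R]_n).

Lemma Ahat_top (k : 'I_n) :
  Ahat alpha s0 P ord0 (widen_ord (leqnSn n) k) = alpha 0 k.
Proof.
rewrite /Ahat castmxE (_ : cast_ord _ ord0 = lshift n (0 : 'I_1)); last exact: val_inj.
by rewrite (_ : cast_ord _ _ = lshift 1 k) ?block_mxEul //; apply: val_inj.
Qed.

Lemma Ahat_top_last : Ahat alpha s0 P ord0 ord_max = s0.
Proof.
rewrite /Ahat castmxE (_ : cast_ord _ ord0 = lshift n (0 : 'I_1)); last exact: val_inj.
rewrite (_ : cast_ord _ _ = rshift n (0 : 'I_1)) ?block_mxEur ?mxE //.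
by apply: val_inj; rewrite /= addn0.
Qed.

Lemma Ahat_lift (k' k : 'I_n) :
  Ahat alpha s0 P (lift ord0 k') (widen_ord (leqnSn n) k) = P k' k.
Proof.
rewrite /Ahat castmxE (_ : cast_ord _ (lift _ _) = rshift 1 k'); last exact: val_inj.
by rewrite (_ : cast_ord _ _ = lshift 1 k) ?block_mxEdl //; apply: val_inj.
Qed.

Lemma Ahat_lift_last (k' : 'I_n) : Ahat alpha s0 P (lift ord0 k') ord_max = 0.
Proof.
rewrite /Ahat castmxE (_ : cast_ord _ (lift _ _) = rshift 1 k'); last exact: val_inj.
rewrite (_ : cast_ord _ _ = rshift n (0 : 'I_1)) ?block_mxEdr ?mxE //.
by apply: val_inj; rewrite /= addn0.
Qed.

End AhatEntries.

Definition pstar_sign (R : nzRingType) n (s0 : R) k : R :=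
  if (2 * k.+1 <= n.+1)%N then s0 * (-1) ^+ k else s0 * (-1) ^+ (n - k).

Lemma PstarE (R : nzRingType) n (s0 : R) (k' k : 'I_n) :
  Pstar n s0 k' k = if (k' + k == n.-1)%N then pstar_sign n s0 k else 0.
Proof.
rewrite /Pstar mxE /pstar_sign subSS.
by congr (if _ then _ else _); apply/eqP/eqP; have := ltn_ord k; lia.
Qed.

Lemma pstar_sign_mul_rev (R : comNzRingType) n (s0 : R) k :
  s0 ^+ 2 = 1 -> (k <= n)%N -> pstar_sign n s0 k * pstar_sign n s0 (n - k) = 1.
Proof.
move=> s0_sqr le_kn; rewrite /pstar_sign subKn //.
have sgn_sqr m : (-1) ^+ m * (-1) ^+ m = 1 :> R by rewrite -expr2 sqrr_sign.
have s0_sgn m : s0 * (-1) ^+ m * (s0 * (-1) ^+ m) = 1.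
  by rewrite mulrACA sgn_sqr -expr2 s0_sqr mulr1.
case: ifP => h1; case: ifP => h2 //; first by move: h1 h2; lia.
by rewrite (_ : n - k = k)%N //; move: h1 h2; lia.
Qed.

Section AhatEigenvectors.
Variables (R : rcfType) (n : nat) (alpha : 'rV[R]_n) (s0 : R) (P : 'M[R]_n).
Variables (v : 'rV[R[i]]_(1 + n)) (z : R[i]).
Hypothesis eigv : v *m cmx (Ahat alpha s0 P) = z *: v.

Lemma Ahat_eigenvector_col (k : 'I_n) :
  z * v 0 (widen_ord (leqnSn n) k) =
  v 0 ord0 * (alpha 0 k)%:C%C + \sum_i v 0 (lift ord0 i) * (P i k)%:C%C.
Proof.
have /rowP/(_ (widen_ord (leqnSn n) k)) := eigv.
by rewrite [RHS]mxE mxE big_ord_recl /= => <-; rewrite !mxE Ahat_top;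
  under eq_bigr do rewrite !mxE Ahat_lift.
Qed.

Lemma Ahat_eigenvector_last : z * v 0 ord_max = v 0 ord0 * s0%:C%C.
Proof.
have /rowP/(_ ord_max) := eigv.
rewrite [RHS]mxE mxE big_ord_recl big1 => [|i _].
  by rewrite !mxE Ahat_top_last addr0 => <-.
by rewrite !mxE Ahat_lift_last mulr0.
Qed.

End AhatEigenvectors.

Section PstarEigenvectors.
Variables (R : rcfType) (n : nat) (alpha : 'rV[R]_n) (s0 : R).
Variables (v : 'rV[R[i]]_(1 + n)) (z : R[i]).
Hypothesis eigv : v *m cmx (Ahat alpha s0 (Pstar n s0)) = z *: v.

Lemma Pstar_eigenvector_col k (lt_kn : (k < n)%N) :
  z * v 0 (inord k) = v 0 (inord 0) * (alpha 0 (Ordinal lt_kn))%:C%C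
                      + v 0 (inord (n - k)) * (pstar_sign n s0 k)%:C%C.
Proof.
have -> : inord k = widen_ord (leqnSn n) (Ordinal lt_kn).
  by apply: val_inj; rewrite /= inordK // ltnW.
rewrite (Ahat_eigenvector_col eigv) (_ : inord 0 = ord0); last first.
  by apply: val_inj; rewrite /= inordK.
congr (_ + _).
have lt_rev : (n.-1 - k < n)%N by lia.
rewrite (bigD1 (Ordinal lt_rev)) //= big1 => [|i /eqP ik]; rewrite PstarE /=.
  rewrite ifT ?addr0; last by apply/eqP; lia.
  by congr (v 0 _ * _); apply: val_inj; rewrite /= inordK /bump; lia.
by rewrite ifF ?mulr0 //; apply/eqP => ikn; apply: ik; apply: val_inj => /=; lia.
Qed.

Lemma Pstar_eigenvector_last : z * v 0 (inord n) = v 0 (inord 0) * s0%:C%C.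
Proof.
have -> : inord n = ord_max :> 'I_(1 + n) by apply: val_inj; rewrite /= inordK.
have -> : inord 0 = ord0 :> 'I_(1 + n) by apply: val_inj; rewrite /= inordK.
exact: Ahat_eigenvector_last eigv.
Qed.

End PstarEigenvectors.

Lemma coupled_pair_Im_eq0 (R : rcfType) (z x y : R[i]) (a b c : R) :
  x != 0 -> b * c = 1 ->
  z * x = x * a%:C%C + y * b%:C%C -> z * y = x * c%:C%C -> complex.Im z = 0.
Proof.
move=> x_neq0 bc1 zx zy.
(* [z] is a root of z^2 - a z - 1, whose discriminant a^2 + 4 is positive *)
have : (z ^+ 2 - a%:C%C * z - 1) * x =
    z * (z * x - (x * a%:C%C + y * b%:C%C)) + b%:C%C * (z * y - x * c%:C%C)
    + (b%:C%C * c%:C%C - 1) * x by ring.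
rewrite zx zy -rmorphM bc1 rmorph1 !subrr !mulr0 mul0r !addr0 => /eqP.
rewrite mulf_eq0 (negbTE x_neq0) orbF expr2.
case: z {zx zy} => p q; rewrite eq_complex /= => /andP[/eqP re0 /eqP im0].
have /eqP : q * (2 * p - a) = 0 by lra.
rewrite mulf_eq0 => /orP[/eqP // | /eqP ap].
have a_eq : a = 2 * p by lra.
by rewrite a_eq in re0; nra.
Qed.

Lemma Ahat_Pstar_eigenvalue_real (R : rcfType) n (s0 : R) (alpha : 'rV[R]_n) z :
  (1 <= n)%N -> s0 ^+ 2 = 1 ->
  eigenvalue (cmx (Ahat alpha s0 (Pstar n s0))) z -> complex.Im z = 0.
Proof.
move=> n_gt0 s0_sqr /eigenvalueP[v eigv v_neq0].
pose u t := v 0 (inord t).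
have last_eq : z * u n = u 0 * s0%:C%C := Pstar_eigenvector_last eigv.
have first_eq : z * u 0 = u 0 * (alpha 0 (Ordinal n_gt0))%:C%C + u n * s0%:C%C.
  have := Pstar_eigenvector_col eigv n_gt0.
  by rewrite subn0 /pstar_sign muln1 ltnS n_gt0 expr0 mulr1.
have [u0_eq0 | u0_neq0] := eqVneq (u 0) 0; last first.
  by apply: coupled_pair_Im_eq0 u0_neq0 _ first_eq last_eq; rewrite -expr2.
have s0C_neq0 : s0%:C%C != 0 :> R[i].
  rewrite eq_complex /= negb_and; apply/orP; left.
  by apply: contra_eq_neq s0_sqr => ->; rewrite expr0n eq_sym oner_neq0.
have un_eq0 : u n = 0.
  move/eqP: first_eq; rewrite u0_eq0 mulr0 mul0r add0r eq_sym mulf_eq0.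
  by rewrite (negbTE s0C_neq0) orbF => /eqP.
have /rV0Pn[t vt_neq0] := v_neq0.
have ut_neq0 : u t != 0 by rewrite /u inord_val.
have lt0t : (0 < t)%N.
  by rewrite lt0n; apply: contraNneq ut_neq0 => ->; rewrite u0_eq0.
have lttn : (t < n)%N.
  have := ltn_ord t; rewrite ltnS leq_eqVlt => /orP[/eqP tn|//].
  by move: ut_neq0; rewrite tn un_eq0 eqxx.
have lt_rev : (n - t < n)%N by rewrite ltn_subrL lt0t.
have v0_eq0 : v 0 (inord 0) = 0 := u0_eq0.
apply: (@coupled_pair_Im_eq0 _ _ (u t) (u (n - t)%N) 0 _ _ ut_neq0).
- exact: pstar_sign_mul_rev s0_sqr (ltnW lttn).
- by rewrite (Pstar_eigenvector_col eigv lttn) v0_eq0 mul0r add0r mulr0 add0r.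
- rewrite (Pstar_eigenvector_col eigv lt_rev) subKn ?(ltnW lttn) //.
  by rewrite v0_eq0 mul0r add0r.
Qed.

Theorem theorem2 (R : realType) (n : nat) (hn : (1 <= n)%N)
  (s0 : R) (hs0 : (s0 == 1) || (s0 == -1))
  (tau : R) (htau : 0 < tau)
  (alpha0 : R) (halpha0 : 0 <= alpha0) (alpha : 'rV[R]_n)
  (P : 'M[R]_n) (hP : signed_perm_mx P) :
  ((forall w : R[i],
       \det (- ('i%C * w) *: cmx (Dmx n tau) - cmx (Bhat alpha0 P)) = 0 ->
       complex.Im w <= 0)
    <->
   (exists (S E : 'M[R]_n),
       S^T = - S /\ is_diag_mx E /\ (forall k, E k k \in [:: 0; 1]) /\
       P = S - E))
  /\
  (P = Pstar n s0 ->
     forall z : R[i], eigenvalue (cmx (Ahat alpha s0 P)) z -> complex.Im z = 0).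
Proof.
split.
  apply: iff_trans (stable_Dmx_Bhat_iff P htau halpha0) _.
  exact: signed_perm_mx_eigenvalue_Re_le0P.
have s0_sqr : s0 ^+ 2 = 1 by case/orP: hs0 => /eqP->; rewrite ?sqrrN expr1n.
by move=> -> z; apply: Ahat_Pstar_eigenvalue_real.
Qed.
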